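(* Let $q$ be an indeterminate and work in the algebra of formal series in the noncommuting indeterminates $S_0,S_1,S_2,\dots$ over $\mathbb{C}(q)$, graded by $\deg S_k=k$. Define $g_n$ ($n\ge 0$) by $g_0=S_0$ and, for $n\ge1$, $$(q^n-1)\,g_n=\sum_{k=1}^{n} S_k\sum_{\substack{j_1+\cdots+j_{k+1}=n-k\\ j_i\ge 0}} g_{j_1}g_{j_2}\cdots g_{j_{k+1}},$$ and set $g=\sum_{n\ge0}g_n$. Then $$g=\sum_{T} m_T(q)\, S^{I(T)},\qquad m_T(q)=\prod_{v}\frac{1}{q^{\phi(v)-1}-1},$$ where $T$ runs over all reduced plane trees (including the tree consisting of a single leaf), $I(T)$ is the Polish code of $T$, the product runs over the internal vertices $v$ of $T$, and $\phi(v)$ is the number of leaves of the subtree of $T$ rooted at $v$. More precisely, for each $n\ge 0$, $g_n$ is the sum of $m_T(q)S^{I(T)}$ over the reduced plane trees $T$ with $n+1$ leaves.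
   Context: A reduced plane tree (Schröder tree) is a rooted plane (ordered) tree in which every internal vertex has at least two children; vertices without children are leaves. The Polish code $I(T)=(i_1,\dots,i_m)$ of $T$ is the sequence obtained by listing the vertices in preorder (root first, then the subtrees of the children from left to right, recursively) and recording $0$ for a leaf and $k$ for an internal vertex with $k+1$ children. For a sequence $I=(i_1,\dots,i_m)$ of nonnegative integers, $S^I=S_{i_1}S_{i_2}\cdots S_{i_m}$. The empty product $m_T(q)$ for the single-leaf tree equals $1$. *)

From HB Require Import structures.
From mathcomp Require Import all_boot all_order all_algebra all_field.
From mathcomp Require Import fraction algC.
Set Implicit Arguments. Unset Strict Implicit. Unset Printing Implicit Defensive.
Import Order.TTheory GRing.Theory Num.Theory.
Local Open Scope ring_scope.

(** Coefficient field C(q): the field of fractions of polynomials over the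
    algebraic complex numbers, with q the indeterminate. *)
Definition K : fieldType := {fraction {poly algC}}.
Definition qv : K := @FracField.tofrac {poly algC} 'X.

(** Formal series in the noncommuting indeterminates S_0, S_1, ...:
    a series assigns a coefficient to every word (seq nat) in the S_k. *)
Definition series := seq nat -> K.

Definition addS (a b : series) : series := fun w => a w + b w.
Definition oneS : series := fun w => (w == [::])%:R.
Definition mulS (a b : series) : series :=
  fun w => \sum_(i < (size w).+1) a (take i w) * b (drop i w).
Definition Svar (k : nat) : series := fun w => (w == [:: k])%:R.
Definition Smon (I : seq nat) : series := fun w => (w == I)%:R.
Definition prodS (l : seq series) : series := foldr mulS oneS l.

Definition rhs (g : nat -> series) (n : nat) : series :=
  fun w => \sum_(1 <= k < n.+1)
    mulS (Svar k)
      (fun w' => \sum_(j : {ffun 'I_k.+1 -> 'I_(n - k).+1}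
                        | (\sum_(i < k.+1) (j i : nat))%N == (n - k)%N)
                   prodS [seq g (nat_of_ord (j i)) | i <- enum 'I_k.+1] w') w.

Inductive ptree := PNode of seq ptree.

Fixpoint enc (t : ptree) : GenTree.tree nat :=
  let: PNode s := t in GenTree.Node 0 (map enc s).
Fixpoint dec (g : GenTree.tree nat) : ptree :=
  match g with
  | GenTree.Leaf _ => PNode [::]
  | GenTree.Node _ s => PNode (map dec s)
  end.
Lemma encK : cancel enc dec.
Proof.
rewrite /cancel; fix IH 1 => -[s] /=; congr PNode.
elim: s => [|t s IHs] //=; by rewrite IH IHs.
Qed.
HB.instance Definition _ := Countable.copy ptree (can_type encK).

Fixpoint leaves (t : ptree) : nat :=
  let: PNode s := t in if s is [::] then 1%N else sumn (map leaves s).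

Fixpoint reduced (t : ptree) : bool :=
  let: PNode s := t in (size s != 1%N) && all reduced s.

(** Polish code: preorder, 0 for a leaf, k for a vertex with k+1 children *)
Fixpoint code (t : ptree) : seq nat :=
  let: PNode s := t in (size s).-1 :: flatten (map code s).

Fixpoint mT (t : ptree) : K :=
  let: PNode s := t in
  (if s is [::] then 1 else (qv ^+ (leaves (PNode s)).-1 - 1)^-1)
    * \prod_(x <- map mT s) x.

(** A reduced plane tree with [n + 1 >= 2] leaves is a root with [k + 1 >= 2]
    ordered subtrees whose leaf counts [j_1 + 1, ..., j_(k+1) + 1] satisfy
    [j_1 + ... + j_(k+1) = n - k].  The monomial of such a tree is [S_k] times
    the concatenated monomials of the subtrees, and its weight is the product
    of the subtree weights divided by [q^n - 1].  Hence the tree expansions of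
    [g_0, ..., g_(n-1)] turn the right-hand side of the recursion into
    [(q^n - 1)] times the tree expansion in degree [n], and [g_n] is obtained by
    strong induction on [n]. *)
From HB Require Import structures.
From mathcomp Require Import all_boot all_order all_algebra all_field.
From mathcomp Require Import fraction algC.
From mathcomp Require Import zify.
From Stdlib Require Import FunctionalExtensionality.
Set Implicit Arguments. Unset Strict Implicit. Unset Printing Implicit Defensive.
Import GRing.Theory.
Local Open Scope ring_scope.

Lemma qvXn_sub1_neq0 n : (0 < n)%N -> qv ^+ n - 1 != 0.
Proof.
move=> n_gt0; rewrite /qv -(rmorph1 (@FracField.tofrac {poly algC})) -rmorphXn.
rewrite -rmorphB -(rmorph0 (@FracField.tofrac {poly algC})) tofrac_eq.
by have := monicXnsubC (1 : algC) n_gt0; rewrite polyC1 => /monic_neq0.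
Qed.

Lemma Smon_cons k u a w : Smon (k :: u) (a :: w) = (a == k)%:R * Smon u w.
Proof. by rewrite /Smon eqseq_cons -mulnb natrM. Qed.

Lemma mulS_Svar_nil k f : mulS (Svar k) f [::] = 0.
Proof. by rewrite /mulS big_ord1 /= mul0r. Qed.

Lemma mulS_Svar_cons k f a w : mulS (Svar k) f (a :: w) = (a == k)%:R * f w.
Proof.
rewrite /mulS /Svar !big_ord_recl /= mul0r add0r take0 drop0 eqseq_cons andbT.
rewrite big1 ?addr0 // => i _.
by case: w i => [|b w] [i lt_i] //=; rewrite eqseq_cons andbF mul0r.
Qed.

Lemma mulS_Smon u v : mulS (Smon u) (Smon v) = Smon (u ++ v).
Proof.
apply: functional_extensionality => w; rewrite /mulS /Smon.
have [->|neq_w] := eqVneq w (u ++ v); last first.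
  rewrite big1 // => i _.
  have [take_w|] := eqVneq (take i w) u; last by rewrite mul0r.
  have [drop_w|] := eqVneq (drop i w) v; last by rewrite mulr0.
  by rewrite -take_w -drop_w cat_take_drop eqxx in neq_w.
have lt_u : (size u < (size (u ++ v)).+1)%N by rewrite size_cat ltnS leq_addr.
rewrite (bigD1 (Ordinal lt_u)) //= take_size_cat // drop_size_cat // !eqxx mulr1.
rewrite big1 ?addr0 // => i neq_i.
have [take_i|] := eqVneq (take i (u ++ v)) u; last by rewrite mul0r.
suff eq_i : (i : nat) = size u by move: neq_i; rewrite -val_eqE /= eq_i eqxx.
have := congr1 size take_i; rewrite size_take; have := ltn_ord i.
by case: (ltnP i (size (u ++ v))) => /=; lia.
Qed.

Lemma mulS_sum_Smon (I J : Type) (r : seq I) (r' : seq J) a b u v :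
  mulS (fun w => \sum_(x <- r) a x * Smon (u x) w)
       (fun w => \sum_(y <- r') b y * Smon (v y) w) =
  fun w => \sum_(x <- r) \sum_(y <- r') a x * b y * Smon (u x ++ v y) w.
Proof.
apply: functional_extensionality => w; rewrite /mulS.
under eq_bigr do rewrite mulr_suml; rewrite exchange_big; apply: eq_bigr => x _.
under eq_bigr do rewrite mulr_sumr; rewrite exchange_big; apply: eq_bigr => y _.
rewrite -(mulS_Smon (u x) (v y)) /mulS mulr_sumr.
by apply: eq_bigr => i _; rewrite mulrACA.
Qed.

Fixpoint cprod (T : Type) (L : seq (seq T)) : seq (seq T) :=
  if L is l :: L' then [seq t :: c | t <- l, c <- cprod L'] else [:: [::]].

Lemma uniq_cprod (T : eqType) (L : seq (seq T)) : all uniq L -> uniq (cprod L).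
Proof.
elim: L => [|l L IHL] //= /andP[uniq_l /IHL uniq_L].
by apply: allpairs_uniq => // -[t c] [t' c'] _ _ /= [-> ->].
Qed.

Lemma mem_cprod_map_self (T : eqType) (F : T -> seq T) c :
  all (fun t => t \in F t) c -> c \in cprod (map F c).
Proof.
elim: c => [|t c IHc] /=; first by rewrite mem_seq1.
by case/andP=> t_in /IHc c_in; apply: allpairs_f.
Qed.

Lemma uniq_flatten_map (I T : eqType) (f : I -> seq T) s :
  uniq s -> (forall x, x \in s -> uniq (f x)) ->
  (forall x y z, x \in s -> y \in s -> z \in f x -> z \in f y -> x = y) ->
  uniq (flatten (map f s)).
Proof.
elim: s => [|x s IHs] //= /andP[x_notin uniq_s] uniq_f disj.
rewrite cat_uniq uniq_f ?mem_head // IHs //; last 2 first.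
- by move=> y y_in; rewrite uniq_f // in_cons y_in orbT.
- by move=> y y' z y_in y'_in; apply: disj; rewrite in_cons ?y_in ?y'_in orbT.
rewrite andbT; apply/hasPn => z /flatten_mapP[y y_in z_in]; apply/negP => z_in'.
suff eq_xy : x = y by rewrite eq_xy y_in in x_notin.
by apply: (disj x y z) => //; rewrite in_cons ?eqxx ?y_in ?orbT.
Qed.

Lemma nth_leq_sumn (s : seq nat) i : (nth 0 s i <= sumn s)%N.
Proof.
elim: s i => [|x s IHs] [|i] //=; first exact: leq_addr.
exact: leq_trans (IHs i) (leq_addl _ _).
Qed.

Definition weak_compositions (m p : nat) : seq {ffun 'I_p -> 'I_m.+1} :=
  [seq j : {ffun 'I_p -> 'I_m.+1} <- index_enum _ | (\sum_(i < p) (j i : nat))%N == m].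

Definition parts (m p : nat) (j : {ffun 'I_p -> 'I_m.+1}) : seq nat :=
  [seq (j i : nat) | i <- enum 'I_p].

Section WeakCompositions.
Variables m p : nat.
Implicit Type j : {ffun 'I_p -> 'I_m.+1}.

Lemma size_parts j : size (parts j) = p.
Proof. by rewrite size_map size_enum_ord. Qed.

Lemma mem_weak_compositions j : (j \in weak_compositions m p) = (sumn (parts j) == m).
Proof. by rewrite mem_filter mem_index_enum andbT sumnE big_map big_enum. Qed.

Lemma parts_leq j x : x \in parts j -> (x <= m)%N.
Proof. by case/mapP=> i _ ->; rewrite -ltnS. Qed.

Lemma parts_inj : injective (@parts m p).
Proof.
move=> j j' eq_parts; apply/ffunP => i; apply: val_inj.
by move/eq_in_map: eq_parts => /(_ i (mem_enum _ i)).
Qed.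

Lemma weak_composition_of_seq s : size s = p -> sumn s = m ->
  exists2 j, j \in weak_compositions m p & parts j = s.
Proof.
move=> size_s sum_s; pose j := [ffun i : 'I_p => inord (nth 0 s i) : 'I_m.+1].
suff parts_j : parts j = s by exists j; rewrite // mem_weak_compositions parts_j sum_s.
rewrite -[RHS](mkseq_nth 0) size_s /mkseq -val_enum_ord -map_comp.
by apply: eq_map => i /=; rewrite ffunE inordK // ltnS -sum_s nth_leq_sumn.
Qed.

End WeakCompositions.

Lemma ptree_mem_ind (P : ptree -> Prop) :
  (forall c, (forall t, t \in c -> P t) -> P (PNode c)) -> forall t, P t.
Proof.
move=> IH; fix IHt 1 => -[c]; apply: IH.
elim: c => [|t c IHc] u; first by rewrite in_nil => u_in; discriminate u_in.
rewrite in_cons => /orP[/eqP-> | u_in]; [exact: IHt | exact: IHc u_in].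
Qed.

Lemma leaves_gt0 t : (0 < leaves t)%N.
Proof. by elim/ptree_mem_ind: t => -[|t c] IH //=; rewrite ltn_addr ?IH ?mem_head. Qed.

Lemma PNode_inj : injective PNode.
Proof. by move=> c c' []. Qed.

Lemma sumn_map_succn (s : seq nat) : sumn (map succn s) = (sumn s + size s)%N.
Proof. by elim: s => //= x s ->; lia. Qed.

Lemma map_leaves_succn c :
  map leaves c = map succn [seq (leaves t).-1 | t <- c].
Proof. by rewrite -map_comp; apply: eq_map => t /=; rewrite prednK ?leaves_gt0. Qed.

Lemma leaves_PNode c : c != [::] -> leaves (PNode c) = sumn (map leaves c).
Proof. by case: c. Qed.

Lemma reduced_leaves1 t : (t == PNode [::]) = reduced t && (leaves t == 1%N).
Proof.
apply/eqP/andP => [->|[]] //.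
case: t => -[|t1 [|t2 c]] //= _ /eqP.
by have := leaves_gt0 t1; have := leaves_gt0 t2; lia.
Qed.

Lemma mT_PNode c : c != [::] ->
  mT (PNode c) = (qv ^+ (leaves (PNode c)).-1 - 1)^-1 * \prod_(t <- c) mT t.
Proof. by case: c => //= t c _; rewrite !big_cons big_map. Qed.

Definition tree_series (l : seq ptree) : series :=
  fun w => \sum_(t <- l) mT t * Smon (code t) w.

Lemma prodS_tree_series (L : seq (seq ptree)) :
  prodS [seq tree_series l | l <- L] =
  fun w => \sum_(c <- cprod L) (\prod_(t <- c) mT t) * Smon (flatten (map code c)) w.
Proof.
elim: L => [|l L IHL] /=.
  by apply: functional_extensionality => w; rewrite big_seq1 big_nil mul1r.
rewrite IHL /tree_series mulS_sum_Smon; apply: functional_extensionality => w.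
by rewrite big_allpairs_dep; do 2!apply: eq_bigr => ? _; rewrite big_cons.
Qed.

Lemma cprod_map_trees (S : nat -> seq ptree) (L : seq nat) c :
  (forall m t, m \in L -> t \in S m -> reduced t && (leaves t == m.+1)) ->
  c \in cprod (map S L) -> all reduced c && (map leaves c == map succn L).
Proof.
elim: L c => [|m L IHL] c S_trees /=; first by rewrite mem_seq1 => /eqP->.
case/allpairsP=> -[t c'] /= [t_in c'_in ->] /=.
have /andP[-> /eqP->] := S_trees m t (mem_head _ _) t_in.
have /IHL/(_ c'_in)/andP[-> /eqP->] : forall m' t', m' \in L -> t' \in S m' ->
    reduced t' && (leaves t' == m'.+1).
  by move=> m' t' m'_in; apply: S_trees; rewrite in_cons m'_in orbT.
by rewrite eqxx.
Qed.

Definition children_lists (S : nat -> seq ptree) (N : nat) : seq (seq ptree) :=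
  flatten [seq flatten [seq cprod (map S (parts j)) | j <- weak_compositions (N - k) k.+1]
          | k <- iota 1 N].

Section ChildrenLists.
Variables (S : nat -> seq ptree) (N : nat).
Hypothesis S_mem :
  forall m, (m < N)%N -> forall t, (t \in S m) = reduced t && (leaves t == m.+1).
Hypothesis S_uniq : forall m, (m < N)%N -> uniq (S m).

Lemma parts_ltn k (j : {ffun 'I_k.+1 -> 'I_(N - k).+1}) m :
  k \in iota 1 N -> m \in parts j -> (m < N)%N.
Proof. by rewrite mem_iota => k_bounds /parts_leq; lia. Qed.

Lemma forest_trees k (j : {ffun 'I_k.+1 -> 'I_(N - k).+1}) c :
  k \in iota 1 N -> c \in cprod (map S (parts j)) ->
  all reduced c && (map leaves c == map succn (parts j)).
Proof.
move=> k_in; apply: cprod_map_trees => m t m_in.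
by rewrite S_mem // (parts_ltn k_in m_in).
Qed.

Lemma forest_shape k (j : {ffun 'I_k.+1 -> 'I_(N - k).+1}) c :
  k \in iota 1 N -> j \in weak_compositions (N - k) k.+1 ->
  c \in cprod (map S (parts j)) ->
  [/\ all reduced c, size c = k.+1 & sumn (map leaves c) = N.+1].
Proof.
move=> k_in j_in /(forest_trees k_in) /andP[-> /eqP leaves_c].
have size_c : size c = k.+1 by rewrite -(size_map leaves) leaves_c size_map size_parts.
split=> //; move: j_in k_in; rewrite mem_weak_compositions mem_iota leaves_c.
by rewrite sumn_map_succn size_parts => /eqP->; lia.
Qed.

Lemma children_lists_uniq : uniq (children_lists S N).
Proof.
apply: uniq_flatten_map; first exact: iota_uniq.
  move=> k k_in; apply: uniq_flatten_map; first exact/filter_uniq/index_enum_uniq.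
    move=> j _; apply: uniq_cprod; apply/allP => _ /mapP[m m_in ->].
    exact/S_uniq/(parts_ltn k_in m_in).
  move=> j j' c _ _ /(forest_trees k_in) /andP[_ /eqP leaves_c].
  move=> /(forest_trees k_in) /andP[_ /eqP]; rewrite leaves_c.
  by move/(inj_map succn_inj)/parts_inj.
move=> k k' c k_in k'_in /flatten_mapP[j j_in c_in] /flatten_mapP[j' j'_in c'_in].
have [_ size_c _] := forest_shape k_in j_in c_in.
have [_ size_c' _] := forest_shape k'_in j'_in c'_in.
by move: size_c'; rewrite size_c => -[].
Qed.

Lemma children_lists_reduced c :
  c \in children_lists S N -> reduced (PNode c) && (leaves (PNode c) == N.+1).
Proof.
case/flatten_mapP=> k k_in /flatten_mapP[j j_in c_in].
have [reduced_c size_c leaves_c] := forest_shape k_in j_in c_in.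
have k_gt0 : (0 < k)%N by move: k_in; rewrite mem_iota => /andP[].
rewrite leaves_PNode -?size_eq0 ?size_c // leaves_c eqxx andbT /= reduced_c size_c.
by case: (k) k_gt0.
Qed.

Lemma reduced_children_lists c : (0 < N)%N ->
  reduced (PNode c) -> leaves (PNode c) = N.+1 -> c \in children_lists S N.
Proof.
move=> N_gt0 reduced_Tc.
have /andP[size_c_neq1 reduced_c] : (size c != 1%N) && all reduced c := reduced_Tc.
have [->|c_neq0] := eqVneq c [::]; first by move=> -[N_eq0]; rewrite -N_eq0 in N_gt0.
rewrite leaves_PNode // map_leaves_succn sumn_map_succn size_map.
set s := [seq (leaves t).-1 | t <- c] => leaves_c.
set k := (size c).-1; have size_c : size c = k.+1 by rewrite prednK // lt0n size_eq0.
have k_in : k \in iota 1 N.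
  by move: size_c_neq1 leaves_c; rewrite mem_iota size_c; lia.
have [j j_in parts_j] : exists2 j, j \in weak_compositions (N - k) k.+1 & parts j = s.
  by apply: weak_composition_of_seq; rewrite ?size_map ?size_c //; lia.
apply/flatten_mapP; exists k => //; apply/flatten_mapP; exists j => //.
rewrite parts_j -map_comp; apply: mem_cprod_map_self; apply/allP => t t_in /=.
have lt_t : ((leaves t).-1 < N)%N.
  by apply: (parts_ltn (j := j) k_in); rewrite parts_j; apply: map_f.
by rewrite S_mem // prednK ?leaves_gt0 // eqxx (allP reduced_c).
Qed.

Lemma mem_children_lists c : (0 < N)%N ->
  (c \in children_lists S N) = reduced (PNode c) && (leaves (PNode c) == N.+1).
Proof.
move=> N_gt0; apply/idP/idP; first exact: children_lists_reduced.
by case/andP=> reduced_c /eqP; apply: reduced_children_lists.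
Qed.

Variable g : nat -> series.
Hypothesis g_S : forall m, (m < N)%N -> g m = tree_series (S m).

Lemma rhs_children_lists w : (0 < N)%N ->
  rhs g N w =
  (qv ^+ N - 1) * \sum_(c <- children_lists S N) mT (PNode c) * Smon (code (PNode c)) w.
Proof.
move=> N_gt0; rewrite /rhs /children_lists big_flatten big_map mulr_sumr.
rewrite /index_iota subSS subn0 big_seq [RHS]big_seq; apply: eq_bigr => k k_in.
rewrite big_flatten big_map; case: w => [|a w].
  rewrite mulS_Svar_nil big1 ?mulr0 // => j _; rewrite big1 // => c _.
  by rewrite /Smon mulr0.
rewrite mulS_Svar_cons -[in LHS]big_filter -/(weak_compositions _ _) !mulr_sumr.
rewrite big_seq [RHS]big_seq; apply: eq_bigr => j j_in.
have -> : [seq g (j i : nat) | i <- enum 'I_k.+1] = map tree_series (map S (parts j)).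
  rewrite -!map_comp; apply: eq_map => i /=.
  exact/g_S/(parts_ltn (j := j) k_in)/map_f/mem_enum.
rewrite prodS_tree_series !mulr_sumr big_seq [RHS]big_seq; apply: eq_bigr => c c_in.
have [_ size_c leaves_c] := forest_shape k_in j_in c_in.
have c_neq0 : c != [::] by rewrite -size_eq0 size_c.
rewrite mT_PNode // leaves_PNode // leaves_c /= size_c Smon_cons.
by rewrite !mulrA mulfV ?qvXn_sub1_neq0 // mul1r; congr (_ * _); apply: mulrC.
Qed.

End ChildrenLists.

(** [depth] only bounds the recursion: the list is correct when [n <= depth]. *)
Fixpoint reduced_trees (depth n : nat) : seq ptree :=
  match n, depth with
  | 0, _ => [:: PNode [::]]
  | _.+1, 0 => [::]
  | _.+1, d.+1 => map PNode (children_lists (reduced_trees d) n)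
  end.

Lemma reduced_treesSS d n :
  reduced_trees d.+1 n.+1 = map PNode (children_lists (reduced_trees d) n.+1).
Proof. by []. Qed.

Lemma reduced_treesP d n : (n <= d)%N ->
  uniq (reduced_trees d n) /\
  forall t, (t \in reduced_trees d n) = reduced t && (leaves t == n.+1).
Proof.
elim: d n => [|d IHd] [|n] // le_nd.
1,2: by split=> // t; rewrite mem_seq1 reduced_leaves1.
have S_d m : (m < n.+1)%N -> _ := fun lt_m => IHd m (leq_trans (ltnSE lt_m) le_nd).
have S_uniq m (lt_m : (m < n.+1)%N) := (S_d m lt_m).1.
have S_mem m (lt_m : (m < n.+1)%N) := (S_d m lt_m).2.
rewrite reduced_treesSS; split.
  by rewrite map_inj_uniq ?(children_lists_uniq S_mem S_uniq) //; apply: PNode_inj.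
by case=> c; rewrite mem_map ?(mem_children_lists S_mem) //; apply: PNode_inj.
Qed.

Lemma reduced_trees_expansion (g : nat -> series) :
  g 0%N = Svar 0 ->
  (forall n, (0 < n)%N -> forall w, (qv ^+ n - 1) * g n w = rhs g n w) ->
  forall d n, (n <= d)%N -> g n = tree_series (reduced_trees d n).
Proof.
move=> g0 g_rec; elim=> [|d IHd] [|n] // le_nd; apply: functional_extensionality => w.
1,2: by rewrite g0 /tree_series big_seq1 /= big_nil !mul1r.
apply: (mulfI (qvXn_sub1_neq0 (ltn0Sn n))).
rewrite g_rec // reduced_treesSS /tree_series big_map.
have le_m m : (m < n.+1)%N -> (m <= d)%N by move=> lt_m; exact: leq_trans (ltnSE lt_m) le_nd.
apply: rhs_children_lists => // m lt_m.
- exact: (reduced_treesP (le_m m lt_m)).2.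
- exact: IHd (le_m m lt_m).
Qed.

Theorem mainTheorem1 (g : nat -> series) :
  g 0%N = Svar 0 ->
  (forall n, (0 < n)%N -> forall w, (qv ^+ n - 1) * g n w = rhs g n w) ->
  forall n : nat, exists s : seq ptree,
    [/\ uniq s,
        (forall t, (t \in s) = reduced t && (leaves t == n.+1)) &
        forall w, g n w = \sum_(t <- s) mT t * Smon (code t) w].
Proof.
move=> g0 g_rec n; exists (reduced_trees n n).
have [uniq_s mem_s] := reduced_treesP (leqnn n).
by split=> // w; rewrite (reduced_trees_expansion g0 g_rec (leqnn n)).
Qed.
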